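(* Assume $0<\beta\le\alpha<\sqrt n$ and $e\in\mathbb{R}^n$ satisfies $\|e\|=\sqrt n$. For every point $\bar s\in K_e(\beta)^*$, the cone $K_e(\alpha)^*$ contains the open ball $B(\bar s,r)=\{s:\|s-\bar s\|<r\}$, where \[ r=\frac1n\|\bar s\|\Big(\alpha\sqrt{n-\beta^2}-\beta\sqrt{n-\alpha^2}\Big). \]
   Context: $\mathbb{R}^n$ carries the dot product and Euclidean norm. For $0<\gamma<\sqrt n$, $K_e(\gamma)=\{x:e^Tx\ge\gamma\|x\|\}$ and $K_e(\gamma)^*=\{s:x^Ts\ge0\ \forall x\in K_e(\gamma)\}=\{s:e^Ts\ge\sqrt{n-\gamma^2}\|s\|\}$. *)

From HB Require Import structures.
From mathcomp Require Import all_boot all_order all_algebra.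
Set Implicit Arguments. Unset Strict Implicit. Unset Printing Implicit Defensive.
Import Order.TTheory GRing.Theory Num.Theory.
Local Open Scope ring_scope.

Definition dotv (R : rcfType) (n : nat) (x y : 'rV[R]_n) : R :=
  \sum_(i < n) x 0 i * y 0 i.

Definition enorm (R : rcfType) (n : nat) (x : 'rV[R]_n) : R :=
  Num.sqrt (dotv x x).

Definition Kcone (R : rcfType) (n : nat) (e : 'rV[R]_n) (gamma : R)
  (x : 'rV[R]_n) : Prop := gamma * enorm x <= dotv e x.

Definition dual_cone (R : rcfType) (n : nat) (K : 'rV[R]_n -> Prop)
  (s : 'rV[R]_n) : Prop := forall x, K x -> 0 <= dotv x s.

From HB Require Import structures.
From mathcomp Require Import all_boot all_order all_algebra.
From mathcomp Require Import ring lra.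
Set Implicit Arguments.
Unset Strict Implicit.
Unset Printing Implicit Defensive.

Import Order.TTheory GRing.Theory Num.Theory.
Local Open Scope ring_scope.

(* Split vectors into their components along e and orthogonal to e.  If
   c |x| <= e.x with c^2 + d^2 = |e|^2, the orthogonal part of x has norm at
   most d |x| / |e|; hence for x, y in two such cones
   |e|^2 x.y >= (c1 c2 - d1 d2) |x| |y|, the cosine of the sum of the two
   half-angles.  Testing sbar against a boundary ray of K_e(beta) shows that
   the dual cone K_e(beta)^* lies in the cone with c = sqrt(n - beta^2) and
   d = beta.  With the other cone K_e(alpha) this gives x.sbar >= r |x| for
   x in K_e(alpha), and a perturbation of sbar by less than r in norm changes
   x.sbar by less than r |x|. *)

Lemma sqr_sqrtr_subsqr (R : rcfType) (c N : R) : 0 <= c -> c <= N ->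
  Num.sqrt (N ^+ 2 - c ^+ 2) ^+ 2 = N ^+ 2 - c ^+ 2.
Proof.
by move=> c_ge0 c_le; rewrite sqr_sqrtr // subr_ge0 ler_pXn2r ?nnegrE ?(le_trans c_ge0).
Qed.

Section InnerProduct.
Variables (R : rcfType) (n : nat).
Implicit Types (x y z : 'rV[R]_n) (c : R).

Lemma dotvC x y : dotv x y = dotv y x.
Proof. by apply: eq_bigr => i _; rewrite mulrC. Qed.

Lemma dotvDl x y z : dotv (x + y) z = dotv x z + dotv y z.
Proof. by rewrite /dotv -big_split; apply: eq_bigr => i _; rewrite mxE mulrDl. Qed.

Lemma dotvZl c x z : dotv (c *: x) z = c * dotv x z.
Proof. by rewrite /dotv mulr_sumr; apply: eq_bigr => i _; rewrite mxE mulrA. Qed.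

Lemma dotvNl x z : dotv (- x) z = - dotv x z.
Proof. by rewrite -scaleN1r dotvZl mulN1r. Qed.

Lemma dotvDr x y z : dotv z (x + y) = dotv z x + dotv z y.
Proof. by rewrite dotvC dotvDl !(dotvC z). Qed.

Lemma dotvZr c x z : dotv z (c *: x) = c * dotv z x.
Proof. by rewrite dotvC dotvZl dotvC. Qed.

Lemma dotvNr x z : dotv z (- x) = - dotv z x.
Proof. by rewrite dotvC dotvNl dotvC. Qed.

Definition dotvE := (dotvDl, dotvDr, dotvNl, dotvNr, dotvZl, dotvZr).

Lemma dotvv_ge0 x : 0 <= dotv x x.
Proof. by apply: sumr_ge0 => i _; rewrite -expr2 sqr_ge0. Qed.

Lemma dotvv_eq0 x : dotv x x = 0 -> x = 0.
Proof.
move=> x0; apply/rowP => i; rewrite mxE.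
have sqr_ge0 j : true -> 0 <= x 0 j * x 0 j by rewrite -expr2 sqr_ge0.
by have /eqP := psumr_eq0P sqr_ge0 x0 (i := i) isT; rewrite mulf_eq0 orbb => /eqP.
Qed.

Lemma enorm_ge0 x : 0 <= enorm x.
Proof. exact: sqrtr_ge0. Qed.

Lemma enorm_sqr x : enorm x ^+ 2 = dotv x x.
Proof. by rewrite sqr_sqrtr // dotvv_ge0. Qed.

Lemma dotv_ge_normM x y : - (enorm x * enorm y) <= dotv x y.
Proof.
have [->|y_neq0] := eqVneq y 0.
  by rewrite -(scale0r 0) dotvZr mul0r oppr_le0 mulr_ge0 ?enorm_ge0.
have yy_gt0 : 0 < dotv y y.
  by rewrite lt_def dotvv_ge0 andbT; apply: contra y_neq0 => /eqP/dotvv_eq0->.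
have u_ge0 := dotvv_ge0 (dotv y y *: x - dotv x y *: y).
have cs : dotv x y ^+ 2 <= dotv x x * dotv y y.
  rewrite !dotvE (dotvC y x) in u_ge0.
  have : 0 <= dotv y y * (dotv y y * dotv x x - dotv x y ^+ 2) by lra.
  rewrite pmulr_rge0 //; lra.
rewrite -!enorm_sqr in cs.
have := mulr_ge0 (enorm_ge0 x) (enorm_ge0 y); nra.
Qed.

Lemma dual_cone_ball (K : 'rV[R]_n -> Prop) sbar r :
    (forall x, K x -> r * enorm x <= dotv x sbar) ->
  forall s, enorm (s - sbar) < r -> dual_cone K s.
Proof.
move=> K_sbar s s_near x x_in.
have := dotv_ge_normM x (s - sbar); rewrite dotvDr dotvNr.
have : enorm x * enorm (s - sbar) <= enorm x * r by rewrite ler_wpM2l ?enorm_ge0 ?ltW.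
have := K_sbar x x_in; lra.
Qed.

End InnerProduct.

Section ConeAroundAxis.
Variables (R : rcfType) (n : nat) (e : 'rV[R]_n).
Hypothesis e_gt0 : 0 < enorm e.
Implicit Types (x y s : 'rV[R]_n) (c d : R).

Definition perp x := x - (dotv e x / dotv e e) *: e.

Let ee_neq0 : dotv e e != 0.
Proof. by rewrite -enorm_sqr expf_neq0 // gt_eqF. Qed.

Lemma dotv_perpr x : dotv e (perp x) = 0.
Proof. by rewrite !dotvE divfK // subrr. Qed.

Lemma dotv_perpl x y : dotv (perp x) y = dotv (perp x) (perp y).
Proof.
by rewrite [in RHS]/perp dotvDr dotvNr dotvZr (dotvC _ e) dotv_perpr mulr0 subr0.
Qed.

Lemma dotv_decomp x y :
  dotv x y = dotv e x * dotv e y / dotv e e + dotv (perp x) (perp y).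
Proof. by rewrite /perp !dotvE !(dotvC _ e); field. Qed.

Lemma enorm_perp_le c d x : 0 <= c -> 0 <= d -> c ^+ 2 + d ^+ 2 = enorm e ^+ 2 ->
  c * enorm x <= dotv e x -> enorm e * enorm (perp x) <= d * enorm x.
Proof.
move=> c_ge0 d_ge0 cd_sqr x_in.
have ex_sqr : c ^+ 2 * enorm x ^+ 2 <= dotv e x ^+ 2.
  rewrite -exprMn ler_pXn2r // nnegrE ?mulr_ge0 ?enorm_ge0 //.
  by rewrite (le_trans _ x_in) ?mulr_ge0 ?enorm_ge0.
have perp_sqr : (enorm e * enorm (perp x)) ^+ 2 =
    enorm e ^+ 2 * enorm x ^+ 2 - dotv e x ^+ 2.
  by rewrite exprMn !enorm_sqr (dotv_decomp x x); field.
rewrite -(ler_pXn2r (_ : 0 < 2)%N) ?nnegrE ?mulr_ge0 ?enorm_ge0 //.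
by rewrite perp_sqr exprMn -cd_sqr; lra.
Qed.

Lemma dotv_ge_cone c1 d1 c2 d2 x y :
  0 <= c1 -> 0 <= d1 -> c1 ^+ 2 + d1 ^+ 2 = enorm e ^+ 2 -> c1 * enorm x <= dotv e x ->
  0 <= c2 -> 0 <= d2 -> c2 ^+ 2 + d2 ^+ 2 = enorm e ^+ 2 -> c2 * enorm y <= dotv e y ->
  (c1 * c2 - d1 * d2) * enorm x * enorm y <= enorm e ^+ 2 * dotv x y.
Proof.
move=> c1_ge0 d1_ge0 cd1 x_in c2_ge0 d2_ge0 cd2 y_in.
have axis_part : c1 * enorm x * (c2 * enorm y) <= dotv e x * dotv e y.
  by rewrite ler_pM ?mulr_ge0 ?enorm_ge0.
have perp_part : enorm e * enorm (perp x) * (enorm e * enorm (perp y))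
    <= d1 * enorm x * (d2 * enorm y).
  apply: ler_pM; rewrite ?mulr_ge0 ?enorm_ge0 //.
    exact: (enorm_perp_le c1_ge0 d1_ge0).
  exact: (enorm_perp_le c2_ge0 d2_ge0).
have := dotv_ge_normM (perp x) (perp y).
rewrite (dotv_decomp x y) mulrDr enorm_sqr mulrCA divff // mulr1 -enorm_sqr.
have := enorm_ge0 e; nra.
Qed.

Lemma dual_Kcone_le b s : 0 <= b -> b <= enorm e -> dual_cone (Kcone e b) s ->
  Num.sqrt (enorm e ^+ 2 - b ^+ 2) * enorm s <= dotv e s.
Proof.
move=> b_ge0 b_le s_dual.
set N := enorm e; set S := Num.sqrt _; set a := dotv e s.
have S_ge0 : 0 <= S := sqrtr_ge0 _.
have S_sqr : S ^+ 2 = N ^+ 2 - b ^+ 2 := sqr_sqrtr_subsqr b_ge0 b_le.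
have a_ge0 : 0 <= a.
  by apply: s_dual; rewrite /Kcone -enorm_sqr -/N expr2 ler_pM2r.
have s_sqr : N ^+ 2 * enorm s ^+ 2 = a ^+ 2 + N ^+ 2 * enorm (perp s) ^+ 2.
  rewrite !enorm_sqr (dotv_decomp s s) -/a -enorm_sqr -/N.
  by field; rewrite gt_eqF.
have ep := dotv_perpr s; have ps := dotv_perpl s s.
set p := perp s in s_sqr ep ps *; set w := enorm p in s_sqr *.
have w_ge0 : 0 <= w := enorm_ge0 p.
have w_sqr : dotv p p = w ^+ 2 by rewrite enorm_sqr.
clearbody p.
(* the ray of K_e(b) in the plane of e and s, on the far side of e from s *)
have far_ray : 0 <= dotv ((b * w) *: e - (N * S) *: p) s.
  apply: s_dual; rewrite /Kcone.
  set x1 := _ - _.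
  have x1_sqr : dotv x1 x1 = (N ^+ 2 * w) ^+ 2.
    rewrite !dotvE (dotvC p e) ep w_sqr -enorm_sqr -/N.
    transitivity (N ^+ 2 * w ^+ 2 * (b ^+ 2 + S ^+ 2)); first ring.
    by rewrite S_sqr; ring.
  rewrite /enorm x1_sqr sqrtr_sqr ger0_norm ?mulr_ge0 ?exprn_ge0 ?enorm_ge0 //.
  by rewrite !dotvE ep -enorm_sqr -/N; lra.
rewrite !dotvE -/a ps w_sqr in far_ray.
have axis_ge : N * S * w <= b * a.
  have [w0|w_gt0] := eqVneq w 0; first by rewrite w0 mulr0 mulr_ge0.
  by rewrite -(ler_pM2r (_ : 0 < w)) ?lt_def ?w_gt0 //; lra.
have : N ^+ 2 * (S * enorm s) ^+ 2 <= N ^+ 2 * a ^+ 2.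
  have axis_sqr : (N * S * w) ^+ 2 <= (b * a) ^+ 2.
    by rewrite ler_pXn2r ?nnegrE ?mulr_ge0 ?enorm_ge0.
  rewrite exprMn mulrCA s_sqr mulrDr {1}S_sqr.
  rewrite !exprMn in axis_sqr; lra.
rewrite ler_pM2l ?exprn_gt0 // ler_pXn2r ?nnegrE ?mulr_ge0 ?enorm_ge0 //.
Qed.

End ConeAroundAxis.

Theorem lemma5p4 (R : rcfType) (n : nat) (alpha beta : R) (e : 'rV[R]_n)
  (hb0 : 0 < beta) (hba : beta <= alpha) (han : alpha < Num.sqrt n%:R)
  (he : enorm e = Num.sqrt n%:R)
  (sbar : 'rV[R]_n) (hs : dual_cone (Kcone e beta) sbar) :
  let r := (n%:R)^-1 * enorm sbar *
           (alpha * Num.sqrt (n%:R - beta ^+ 2) - beta * Num.sqrt (n%:R - alpha ^+ 2)) in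
  forall s : 'rV[R]_n, enorm (s - sbar) < r -> dual_cone (Kcone e alpha) s.
Proof.
move=> r; apply: dual_cone_ball => x x_in.
have e_sqr : enorm e ^+ 2 = n%:R by rewrite he sqr_sqrtr ?ler0n.
have alpha_lt_e : alpha < enorm e by rewrite he.
have beta_ge0 := ltW hb0; have alpha_ge0 := le_trans beta_ge0 hba.
have e_gt0 : 0 < enorm e by rewrite (lt_le_trans hb0) // (le_trans hba) ?ltW.
have n_gt0 : 0 < n%:R :> R by rewrite -e_sqr exprn_gt0.
have pythagoras c : 0 <= c -> c <= alpha ->
    c ^+ 2 + Num.sqrt (n%:R - c ^+ 2) ^+ 2 = enorm e ^+ 2.
  move=> c_ge0 c_le; have c_le_e := le_trans c_le (ltW alpha_lt_e).
  by rewrite -e_sqr (sqr_sqrtr_subsqr c_ge0 c_le_e) addrC subrK.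
have sbar_in := dual_Kcone_le e_gt0 beta_ge0 (le_trans hba (ltW alpha_lt_e)) hs.
rewrite e_sqr in sbar_in.
have lower := dotv_ge_cone e_gt0
  alpha_ge0 (sqrtr_ge0 _) (pythagoras _ alpha_ge0 (lexx _)) x_in
  (sqrtr_ge0 _) beta_ge0 (etrans (addrC _ _) (pythagoras _ beta_ge0 hba)) sbar_in.
rewrite e_sqr in lower.
have r_def : n%:R * (r * enorm x) = (alpha * Num.sqrt (n%:R - beta ^+ 2)
    - Num.sqrt (n%:R - alpha ^+ 2) * beta) * enorm x * enorm sbar.
  by rewrite /r; field; rewrite gt_eqF.
by rewrite -(ler_pM2l n_gt0) r_def.
Qed.
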